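(* Let $G$ be a triangular graph and run the procedure described in the context on $G$, starting with two vertices of the outer triangle as the distinguished vertices $v_1,v_2$ (clockwise consecutive, with the edge $v_1v_2$ given some orientation). Then in the resulting orientation every interior vertex of $G$ has in-degree exactly $3$; that is, the restriction of the constructed orientation to the interior edges of $G$ is an internal $3$-orientation.
   Context: A triangular graph is a plane graph with at least 3 vertices all of whose faces, including the outer one, are triangles; its interior vertices/edges are those not on the outer triangle. A near triangulation is a 2-connected plane graph whose outer face is bounded by a cycle (the outer cycle) and all of whose inner faces are triangles. An internal 3-orientation of a triangular graph is an orientation of its interior edges in which every interior vertex has in-degree exactly 3. The procedure: its input is a near triangulation $H$ with two distinguished vertices $v_1,v_2$ such that $v_2$ immediately follows $v_1$ clockwise on the outer cycle; the edge $v_1v_2$ is already oriented, other edges are not. It orients every edge and gives each edge a strength 1 or 2, as follows. (Recursive step) If the outer cycle has a chord $v_av_b$, it splits the outer cycle into cycles $C_1$ (containing $v_1,v_2$) and $C_2$; let $H_1,H_2$ be the subgraphs formed by $C_1$, $C_2$ with their interiors. Run the procedure first on $H_1$ with distinguished vertices $v_1,v_2$, and then on $H_2$ with the endpoints of the chord as distinguished vertices, ordered so that the second immediately follows the first clockwise on the outer cycle of $H_2$ (the chord has been oriented during the run on $H_1$). (Orienting step) If the outer cycle has no chord, let $v_3$ be the vertex immediately following $v_2$ clockwise on the outer cycle (the central vertex). Every edge of the current graph incident to $v_3$ that lies on the outer cycle is oriented towards $v_3$ and given strength 1; every other edge of the current graph incident to $v_3$ is oriented away from $v_3$ and given strength 2.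 Then $v_3$ is deleted, and if vertices other than $v_1,v_2$ remain, the procedure is called recursively on the remaining graph with the same distinguished vertices $v_1,v_2$. *)

From mathcomp Require Import all_boot.

Set Implicit Arguments.
Unset Strict Implicit.
Unset Printing Implicit Defensive.

Section Triangulations.
Variable V : finType.

(* An oriented triangular face is a triple (a,b,c): the face is bounded by
   the directed cycle a -> b -> c -> a.  A set of faces is always taken
   closed under cyclic rotation. *)
Definition rot (t : V * V * V) : V * V * V :=
  let: (a, b, c) := t in (b, c, a).

Definition rot_closed (S : {set V * V * V}) : Prop :=
  forall t, t \in S -> rot t \in S.

Definition in_tri (v : V) (t : V * V * V) : bool :=
  let: (a, b, c) := t in [|| v == a, v == b | v == c].

Definition dedge (S : {set V * V * V}) (a b : V) : bool :=
  [exists c, (a, b, c) \in S].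

Definition adj (S : {set V * V * V}) (a b : V) : bool :=
  dedge S a b || dedge S b a.

(* G is a triangular graph: T is the set of (rotations of) its faces,
   consistently oriented, forming a triangulated 2-sphere whose 1-skeleton
   is the (simple) graph G with vertex set V. *)
Record triangular_graph (T : {set V * V * V}) : Prop := {
  tg_rot : rot_closed T;
  tg_distinct : forall a b c, (a, b, c) \in T -> [&& a != b, b != c & c != a];
  tg_unique : forall a b c c', (a, b, c) \in T -> (a, b, c') \in T -> c = c';
  tg_sym : forall a b, dedge T a b -> dedge T b a;
  tg_card : 3 <= #|V|;
  tg_cover : forall v : V, exists w, adj T v w;
  tg_link : forall v a b, dedge T v a -> dedge T v b ->
              connect (fun x y => (v, x, y) \in T) a b;
  tg_conn : forall a b, connect (adj T) a b;
  tg_euler : #|V| + #|T| %/ 3 = #|[set e : V * V | dedge T e.1 e.2]| %/ 2 + 2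
}.

(* Convention: the triples of the inner faces list their vertices in
   clockwise order.  For a near triangulation given by its inner faces S,
   the outer cycle is formed by the directed edges occurring in exactly one
   direction, and it is then traversed clockwise. *)

Definition outer_next (S : {set V * V * V}) (a b : V) : bool :=
  dedge S a b && ~~ dedge S b a.

Definition on_outer (S : {set V * V * V}) (a : V) : bool :=
  [exists b, outer_next S a b].

Definition outer_edge (S : {set V * V * V}) (a b : V) : bool :=
  outer_next S a b || outer_next S b a.

Definition chord (S : {set V * V * V}) (a b : V) : bool :=
  [&& adj S a b, on_outer S a, on_outer S b & ~~ outer_edge S a b].

Definition vertex_of (S : {set V * V * V}) (v : V) : bool :=
  [exists t in S, in_tri v t].

Definition str1 : 'I_3 := @Ordinal 3 1 isT.
Definition str2 : 'I_3 := @Ordinal 3 2 isT.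

(* Orienting step at the central vertex v3: (x, y, s) means that the edge
   xy is oriented from x to y and given strength s. *)
Definition orient_at (S : {set V * V * V}) (v3 : V) : {set V * V * 'I_3} :=
  [set t : V * V * 'I_3 |
     let: (x, y, s) := t in
     adj S x y &&
     (if outer_edge S x y then (y == v3) && (s == str1)
      else (x == v3) && (s == str2))].

Definition delete_vertex (S : {set V * V * V}) (v : V) : {set V * V * V} :=
  [set t in S | ~~ in_tri v t].

(* run S v1 v2 O : the procedure, run on the near triangulation whose inner
   faces are S, with distinguished vertices v1, v2, can produce the
   orientations/strengths O (of all edges other than v1v2). *)
Inductive run : {set V * V * V} -> V -> V -> {set V * V * 'I_3} -> Prop :=
| run_split (S : {set V * V * V}) (v1 v2 a b x y : V)
    (S1 S2 : {set V * V * V}) (O1 O2 : {set V * V * 'I_3}) :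
    chord S a b ->
    rot_closed S1 -> S1 :|: S2 = S -> S1 :&: S2 = set0 ->
    (forall p q r r', (p, q, r) \in S1 -> (q, p, r') \in S2 ->
        [set p; q] = [set a; b]) ->
    outer_next S1 v1 v2 ->
    [set x; y] = [set a; b] -> outer_next S2 x y ->
    run S1 v1 v2 O1 -> run S2 x y O2 ->
    run S v1 v2 (O1 :|: O2)
| run_orient_stop (S : {set V * V * V}) (v1 v2 v3 : V) :
    (forall a b, ~~ chord S a b) ->
    outer_next S v2 v3 ->
    ~~ [exists w, [&& vertex_of S w, w != v3, w != v1 & w != v2]] ->
    run S v1 v2 (orient_at S v3)
| run_orient_rec (S : {set V * V * V}) (v1 v2 v3 : V) (O : {set V * V * 'I_3}) :
    (forall a b, ~~ chord S a b) ->
    outer_next S v2 v3 ->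
    [exists w, [&& vertex_of S w, w != v3, w != v1 & w != v2]] ->
    run (delete_vertex S v3) v1 v2 O ->
    run S v1 v2 (orient_at S v3 :|: O).

(* The plane triangular graph: faces T, outer face o (a triple of T). *)
Definition outer_faces (o : V * V * V) : {set V * V * V} :=
  [set o; rot o; rot (rot o)].

Definition inner_faces (T : {set V * V * V}) (o : V * V * V) :=
  T :\: outer_faces o.

Definition interior_vertex (o : V * V * V) (v : V) : bool := ~~ in_tri v o.

Definition interior_edge (T : {set V * V * V}) (o : V * V * V) (x y : V) :=
  adj T x y && (interior_vertex o x || interior_vertex o y).

Definition internal_3_orientation (T : {set V * V * V}) (o : V * V * V)
    (A : {set V * V}) : Prop :=
  [/\ forall x y, (x, y) \in A -> interior_edge T o x y,
      forall x y, interior_edge T o x y -> ((x, y) \in A) (+) ((y, x) \in A)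
    & forall v, interior_vertex o v -> #|[set x | (x, v) \in A]| = 3].

Definition interior_restriction (T : {set V * V * V}) (o : V * V * V)
    (O : {set V * V * 'I_3}) : {set V * V} :=
  [set e : V * V | interior_edge T o e.1 e.2 &&
                   [exists s : 'I_3, (e.1, e.2, s) \in O]].

End Triangulations.

From Pilot Require Import Defs.
From mathcomp Require Import all_boot.

(* By induction on the run one proves a stronger statement about any near
   triangulation S with base edge v1 v2: every edge of S except v1 v2 is
   oriented exactly once, v1 and v2 get in-degree 0, the other outer vertices
   in-degree 2 and the inner vertices in-degree 3.  Deleting the central vertex
   v3 gives v3 in-arcs from its two outer neighbours and gives one in-arc to
   each inner neighbour of v3; these neighbours are exactly the vertices that
   become outer in the remaining graph, so the target in-degrees add up.
   Splitting along a chord ab adds the in-degrees of the two sides, since a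
   face-disjoint split shares only a and b, which are outer on both sides.
   That both steps again produce near triangulations (unique outer successor,
   connectivity) follows from the link of every vertex of T being one cycle.
   Finally, for the inner faces of T the interior vertices are exactly the
   inner vertices. *)

Set Implicit Arguments.
Unset Strict Implicit.
Unset Printing Implicit Defensive.

Section Connect.
Variables (T : finType) (e : rel T).

Lemma connect_fwd (P : pred T) x y :
  (forall p q, e p q -> P p -> P q) -> connect e x y -> P x -> P y.
Proof.
move=> cl /connectP [s pth ->]; elim: s x pth => [|z s IH] x //= /andP [exz pzs] Px.
exact: IH pzs (cl _ _ exz Px).
Qed.

Lemma connect_bwd (P : pred T) x y :
  (forall p q, e p q -> P q -> P p) -> connect e x y -> P y -> P x.
Proof.
move=> cl exy; apply: contraLR => nPx.
by apply: (connect_fwd (P := predC P)) exy nPx => p q epq; apply: contra; apply: cl.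
Qed.

Lemma connect_enter (P : pred T) x y :
  (forall p q, e p q -> P p -> q != y -> P q) ->
  connect e x y -> x != y -> P x -> exists2 p, e p y & P p.
Proof.
move=> cl /connectP [s pth Ey]; elim: s x pth Ey => [|z s IH] x /=.
  by move=> _ ->; rewrite eqxx.
case/andP=> exz pzs Ey nx Px; case: (eqVneq z y) => [Ez | nz].
  by exists x => //; rewrite -Ez.
exact: IH pzs Ey nz (cl _ _ exz Px nz).
Qed.

Lemma connect_sink_eq s t t' :
  (forall p q q', e p q -> e p q' -> q = q') ->
  (forall q, ~~ e t q) -> (forall q, ~~ e t' q) ->
  connect e s t -> connect e s t' -> t = t'.
Proof.
move=> fn nt nt' /connectP [p pth Et] /connectP [p' pth' Et'].
elim: p s p' pth pth' Et Et' => [|z p IH] s [|z' p'] //=.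
- by move=> _ _ -> ->.
- by move=> _ /andP [h _] Et _; move: (nt z'); rewrite Et h.
- by move=> /andP [h _] _ _ Et; move: (nt' z); rewrite Et h.
move=> /andP [h1 p1] /andP [h2 p2].
by rewrite (fn _ _ _ h1 h2) in p1 *; apply: IH p1 p2.
Qed.

End Connect.

Lemma set2_eq (T : finType) (p q a b : T) : [set p; q] = [set a; b] ->
  (p == a) && (q == b) || (p == b) && (q == a).
Proof.
move=> E.
have : p \in [set a; b] by rewrite -E set21.
have : q \in [set a; b] by rewrite -E set22.
have : a \in [set p; q] by rewrite E set21.
have : b \in [set p; q] by rewrite E set22.
rewrite !inE.
by do 4!case/orP=> /eqP ?; subst; rewrite ?eqxx ?orbT.
Qed.

Section Faces.
Variable V : finType.
Implicit Types (S : {set V * V * V}) (t : V * V * V) (u v w x y z a b c : V).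

Lemma face_rotl S a b c : rot_closed S -> (a, b, c) \in S -> (b, c, a) \in S.
Proof. by move=> rS /rS. Qed.

Lemma face_rotr S a b c : rot_closed S -> (a, b, c) \in S -> (c, a, b) \in S.
Proof. by move=> rS /(face_rotl rS) /(face_rotl rS). Qed.

Lemma rot3_id t : Defs.rot (Defs.rot (Defs.rot t)) = t.
Proof. by case: t => [[]]. Qed.

Lemma dedgeP S a b : reflect (exists c, (a, b, c) \in S) (dedge S a b).
Proof. exact: existsP. Qed.

Lemma dedge_face S a b c : (a, b, c) \in S -> dedge S a b.
Proof. by move=> h; apply/dedgeP; exists c. Qed.

Lemma vertex_of_face S v x y : (v, x, y) \in S -> vertex_of S v.
Proof. by move=> h; apply/existsP; exists (v, x, y); rewrite h /= eqxx. Qed.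

Lemma vertex_ofP S v : rot_closed S ->
  reflect (exists x y, (v, x, y) \in S) (vertex_of S v).
Proof.
move=> rS; apply: (iffP existsP) => [[[[a b] c]] /andP [h /or3P [] /eqP ->]|[x [y h]]].
- by exists b, c.
- by exists c, a; apply: face_rotl h.
- by exists a, b; apply: face_rotr h.
by exists (v, x, y); rewrite h /= eqxx.
Qed.

Lemma adjC S x y : adj S x y = adj S y x.
Proof. by rewrite /adj orbC. Qed.

Lemma outer_edgeC S x y : outer_edge S x y = outer_edge S y x.
Proof. by rewrite /outer_edge orbC. Qed.

Lemma adj_vertex S x y : rot_closed S -> adj S x y -> vertex_of S x.
Proof.
move=> rS /orP [] /dedgeP [c h]; first exact: vertex_of_face h.
exact: vertex_of_face (face_rotl rS h).
Qed.

Lemma dedge_adj S x y : dedge S x y -> adj S x y.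
Proof. by rewrite /adj => ->. Qed.

Lemma outer_next_adj S x y : outer_next S x y -> adj S x y.
Proof. by case/andP=> h _; rewrite /adj h. Qed.

Lemma outer_edge_adj S x y : outer_edge S x y -> adj S x y.
Proof. by case/orP=> /outer_next_adj //; rewrite adjC. Qed.

Lemma on_outer_vertex S u : on_outer S u -> vertex_of S u.
Proof. by case/existsP=> b /andP [/dedgeP [c h] _]; apply: vertex_of_face h. Qed.

Lemma dedgeS S1 S a b : S1 \subset S -> dedge S1 a b -> dedge S a b.
Proof. by move/subsetP=> sS /dedgeP [c h]; apply: (dedge_face (c := c)); apply: sS. Qed.

Lemma adjS S1 S a b : S1 \subset S -> adj S1 a b -> adj S a b.
Proof. by move=> sS /orP [] h; rewrite /adj (dedgeS sS h) ?orbT. Qed.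

Lemma vertex_ofS S1 S a : S1 \subset S -> vertex_of S1 a -> vertex_of S a.
Proof.
move/subsetP=> sS /existsP [t /andP [h1 h2]].
by apply/existsP; exists t; rewrite h2 sS.
Qed.

Lemma in_delete_vertex S v t : (t \in delete_vertex S v) = (t \in S) && ~~ in_tri v t.
Proof. by rewrite inE. Qed.

Lemma delete_vertex_sub S v : delete_vertex S v \subset S.
Proof. by apply/subsetP => t; rewrite in_delete_vertex => /andP []. Qed.

Lemma rot_closed_delete S v : rot_closed S -> rot_closed (delete_vertex S v).
Proof.
move=> rS [[a b] c]; rewrite !in_delete_vertex => /andP [h nv].
by rewrite rS //=; move: nv; rewrite /= orbC -orbA.
Qed.

End Faces.

Definition link (V : finType) (S : {set V * V * V}) (u : V) : rel V :=
  fun x y => (u, x, y) \in S.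

Definition outer_next_uniq (V : finType) (S : {set V * V * V}) :=
  forall u b b', outer_next S u b -> outer_next S u b' -> b = b'.

Definition adj_connected (V : finType) (S : {set V * V * V}) :=
  forall a b, vertex_of S a -> vertex_of S b -> connect (adj S) a b.

Section Link.
Variables (V : finType) (T : {set V * V * V}).
Hypothesis HT : triangular_graph T.
Implicit Types (S : {set V * V * V}) (u v w x y z a b c : V).

Lemma tg_unique_mid u x x' y : (u, x, y) \in T -> (u, x', y) \in T -> x = x'.
Proof.
by move=> h h'; have rT := tg_rot HT; apply: (tg_unique HT (face_rotr rT h) (face_rotr rT h')).
Qed.

Lemma tg_dedge_last u x y : (u, x, y) \in T -> dedge T u y.
Proof. by move=> h; apply: (tg_sym HT); apply: dedge_face (face_rotr (tg_rot HT) h). Qed.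

Lemma tg_neq_dedge x y : dedge T x y -> x != y.
Proof. by case/dedgeP=> c /(tg_distinct HT) /and3P []. Qed.

Lemma tg_adj_neq S x y : S \subset T -> adj S x y -> x != y.
Proof. by move=> sT /orP [] /(dedgeS sT) /tg_neq_dedge //; rewrite eq_sym. Qed.

Lemma link_pred_closed u (B : pred V) x0 : dedge T u x0 -> x0 \in B ->
  (forall x, x \in B -> exists2 p, p \in B & (u, p, x) \in T) ->
  forall y, dedge T u y -> y \in B.
Proof.
move=> h0 B0 cl y hy; apply: (connect_bwd _ (tg_link HT hy h0) B0) => p q hpq qB.
by case: (cl q qB) => p' p'B hp'; rewrite (tg_unique_mid hpq hp').
Qed.

Section SubFaces.
Variable S : {set V * V * V}.
Hypotheses (sT : S \subset T) (rS : rot_closed S).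

Lemma inner_dedge_full u x0 : ~~ on_outer S u -> dedge S u x0 ->
  forall y, dedge T u y -> dedge S u y.
Proof.
move=> no h0; apply: (link_pred_closed (B := [pred y | dedge S u y]) (dedgeS sT h0)) => //.
move=> x; rewrite inE => hx.
have: ~~ outer_next S u x by apply: contra no => h; apply/existsP; exists x.
rewrite /outer_next hx /= negbK => /dedgeP [c /(face_rotl rS) h1].
by exists c; [apply: dedge_face h1 | apply: (subsetP sT)].
Qed.

Lemma outer_next_on_outer b u : outer_next S b u -> on_outer S u.
Proof.
case/andP=> /dedgeP [c /(face_rotl rS) h] nub; case: (boolP (on_outer S u)) => // no.
have := inner_dedge_full no (dedge_face h) (tg_dedge_last (subsetP sT _ h)).
by rewrite (negbTE nub).
Qed.

Lemma opposite_faces_inner w x y : (w, x, y) \in S -> (w, y, x) \in S -> ~~ on_outer S w.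
Proof.
move=> h1 h2; apply/negP => /existsP [s /andP [hs ns]].
pose B := [pred z | (z == x) || (z == y)].
have cl z : z \in B -> exists2 p, p \in B & (w, p, z) \in T.
  case/orP=> /eqP ->.
    by exists y; [rewrite inE eqxx orbT | apply: (subsetP sT)].
  by exists x; [rewrite inE eqxx | apply: (subsetP sT)].
have := link_pred_closed (dedgeS sT (dedge_face h1)) _ cl (dedgeS sT hs).
rewrite !inE eqxx => /(_ isT) /orP [] /eqP Es; move: ns; rewrite Es.
  by rewrite (dedge_face (face_rotr rS h2)).
by rewrite (dedge_face (face_rotr rS h1)).
Qed.

Hypothesis uS : outer_next_uniq S.

Lemma link_connect_outer u s : outer_next S u s ->
  forall x, dedge S u x -> connect (link S u) s x.
Proof.
move=> hs x hx; case: (boolP (connect (link S u) s x)) => // nc.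
pose B := [pred z | dedge S u z && ~~ connect (link S u) s z].
have cl z : z \in B -> exists2 p, p \in B & (u, p, z) \in T.
  case/andP=> hz nz.
  have : ~~ outer_next S u z.
    by apply: contra nz => /(uS hs) ->; apply: connect0.
  rewrite /outer_next hz /= negbK => /dedgeP [c /(face_rotl rS) h1].
  exists c; last exact: (subsetP sT).
  rewrite inE (dedge_face h1) /=; apply: contra nz => hsc.
  exact: connect_trans hsc (connect1 _).
have hsT : dedge T u s by case/andP: hs => /(dedgeS sT).
have := link_pred_closed (dedgeS sT hx) _ cl hsT.
by rewrite !inE hx nc connect0 andbF => /(_ isT).
Qed.

Lemma link_root u x0 : dedge S u x0 ->
  exists2 r, dedge S u r & forall x, dedge S u x -> connect (link S u) r x.
Proof.
move=> h0; case: (boolP (on_outer S u)) => [/existsP [s hs] | no].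
  by exists s; [case/andP: hs | apply: link_connect_outer].
exists x0 => // x hx.
apply: (connect_fwd _ (tg_link HT (dedgeS sT h0) (dedgeS sT hx)) (connect0 _ _)).
move=> p q hpq hp; apply: connect_trans hp (connect1 _).
case/dedgeP: (inner_dedge_full no h0 (dedge_face hpq)) => q' hq'.
by rewrite /link (tg_unique HT hpq (subsetP sT _ hq')).
Qed.

Lemma link_root_adj u r : (forall x, dedge S u x -> connect (link S u) r x) ->
  forall w, adj S u w -> connect (link S u) r w.
Proof.
move=> hr w /orP [] /dedgeP [c hc]; first exact/hr/(dedge_face hc).
have h1 := face_rotl rS hc.
exact: connect_trans (hr _ (dedge_face h1)) (connect1 h1).
Qed.

Lemma outer_prev_uniq e e' u : outer_next S e u -> outer_next S e' u -> e = e'.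
Proof.
move=> he he'; have /existsP [s hs] := outer_next_on_outer he.
have R := link_root_adj (link_connect_outer hs).
have sink f : outer_next S f u -> forall q, ~~ link S u f q.
  by case/andP=> _ nuf q; apply: contra nuf; apply: dedge_face.
apply: (connect_sink_eq _ (sink _ he) (sink _ he')).
- by move=> p q q' h h'; apply: (tg_unique HT (subsetP sT _ h) (subsetP sT _ h')).
- by apply/R; rewrite adjC outer_next_adj.
- by apply/R; rewrite adjC outer_next_adj.
Qed.

Lemma ear_adj x y z : (x, y, z) \in S -> ~~ dedge S y x -> ~~ dedge S x z ->
  forall w, adj S x w -> (w == y) || (w == z).
Proof.
move=> h ny nz w hw.
have hs : outer_next S x y by rewrite /outer_next (dedge_face h) ny.
apply: (connect_fwd (P := [pred q | (q == y) || (q == z)])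
         _ (link_root_adj (link_connect_outer hs) hw)); last by rewrite /= eqxx.
move=> p q hpq /orP [] /eqP Ep; subst p.
  by rewrite /= (tg_unique HT (subsetP sT _ hpq) (subsetP sT _ h)) eqxx orbT.
by move: nz; rewrite (dedge_face hpq).
Qed.

Hypothesis cS : adj_connected S.

Lemma outer_face_vertices x y z : (x, y, z) \in S ->
  ~~ dedge S y x -> ~~ dedge S z y -> ~~ dedge S x z ->
  forall w, vertex_of S w -> w \in [set x; y; z].
Proof.
move=> h n1 n2 n3 w hw.
have hx := ear_adj h n1 n3.
have hy := ear_adj (face_rotl rS h) n2 n1.
have hz := ear_adj (face_rotr rS h) n3 n2.
apply: (connect_fwd (P := [pred q | q \in [set x; y; z]]) _ (cS (vertex_of_face h) hw));
  last by rewrite /= !inE eqxx.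
move=> p q hpq; rewrite /= !inE -orbA => /or3P [] /eqP Ep; subst p.
- by case/orP: (hx _ hpq) => ->; rewrite ?orbT.
- by case/orP: (hy _ hpq) => ->; rewrite ?orbT.
- by case/orP: (hz _ hpq) => ->; rewrite ?orbT.
Qed.

End SubFaces.
End Link.

Section Orientations.
Variable V : finType.
Implicit Types (S : {set V * V * V}) (O : {set V * V * 'I_3}) (u v w x y z a b c : V).

Definition oriented O x y := [exists s : 'I_3, (x, y, s) \in O].

Definition indeg O u := #|[set x | oriented O x u]|.

Definition target_indeg S v1 v2 u : nat :=
  if (u == v1) || (u == v2) then 0
  else if on_outer S u then 2
  else if vertex_of S u then 3 else 0.

Record good_orientation S v1 v2 O : Prop := GoodOrientation {
  oriented_adj : forall x y, oriented O x y -> adj S x y && ([set x; y] != [set v1; v2]);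
  oriented_once : forall x y, adj S x y -> [set x; y] != [set v1; v2] ->
    oriented O x y != oriented O y x;
  indeg_target : forall u, indeg O u = target_indeg S v1 v2 u
}.

Lemma target_indeg_off S v1 v2 u : ~~ vertex_of S u -> target_indeg S v1 v2 u = 0.
Proof.
by move=> nv; rewrite /target_indeg (negbTE nv) (contraNF (@on_outer_vertex _ _ _) nv) !if_same.
Qed.

Lemma oriented_setU O1 O2 x y :
  oriented (O1 :|: O2) x y = oriented O1 x y || oriented O2 x y.
Proof.
apply/existsP/orP => [[s]|[] /existsP [s h]]; last 2 first.
- by exists s; rewrite inE h.
- by exists s; rewrite inE h orbT.
by rewrite inE => /orP [] h; [left | right]; apply/existsP; exists s.
Qed.

Lemma orient_atE S v x y : oriented (orient_at S v) x y =
  adj S x y && (if outer_edge S x y then y == v else x == v).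
Proof.
apply/existsP/andP => [[s]|[h1 h2]].
  rewrite inE => /andP [-> h]; split => //.
  by case: (outer_edge S x y) h => /andP [].
exists (if outer_edge S x y then str1 else str2).
by rewrite inE h1; case: (outer_edge S x y) h2 => ->.
Qed.

Lemma orient_at_once S v x y : adj S x y -> x != y -> (x == v) || (y == v) ->
  oriented (orient_at S v) x y != oriented (orient_at S v) y x.
Proof.
move=> h nxy hv; rewrite !orient_atE [adj S y x]adjC h outer_edgeC /=.
have nyx : y != x by rewrite eq_sym.
by case: (outer_edge S y x); case/orP: hv => /eqP Ev; subst;
  rewrite ?eqxx ?(negbTE nxy) ?(negbTE nyx).
Qed.

Lemma set2_neq x y v1 v2 v : v \in [set x; y] -> v \notin [set v1; v2] ->
  [set x; y] != [set v1; v2].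
Proof. by move=> hv; apply: contraNneq => <-. Qed.

End Orientations.

Record near_triangulation (V : finType) (T S : {set V * V * V}) : Prop := {
  nt_sub : S \subset T;
  nt_rot : rot_closed S;
  nt_outer_next_uniq : outer_next_uniq S;
  nt_connected : adj_connected S
}.

Section LastFace.
Variables (V : finType) (T S : {set V * V * V}) (v1 v2 v3 : V).
Hypotheses (HT : triangular_graph T) (sT : S \subset T) (rS : rot_closed S).
Hypothesis o23 : outer_next S v2 v3.
Hypothesis only3 : ~~ [exists w, [&& vertex_of S w, w != v3, w != v1 & w != v2]].
Implicit Types (w x y : V).

Lemma last_face_vertex w : vertex_of S w -> [|| w == v3, w == v1 | w == v2].
Proof.
move=> hw; apply: contraNT only3 => nw; apply/existsP; exists w.
by move: nw; rewrite !negb_or hw.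
Qed.

Lemma last_face : (v1, v2, v3) \in S.
Proof.
case/andP: o23 => /dedgeP [c hc] _.
have /and3P [_ n23 n3c] := tg_distinct HT (subsetP sT _ hc).
have := last_face_vertex (vertex_of_face (face_rotr rS hc)).
rewrite eq_sym (negbTE n3c) (negbTE n23) orbF /= => /eqP Ec.
by rewrite Ec in hc; apply: face_rotr.
Qed.

Lemma last_face_outer_next : outer_next S v3 v1.
Proof.
rewrite /outer_next (dedge_face (face_rotr rS last_face)) /=.
apply/negP => /dedgeP [d hd].
have /and3P [_ n3d nd1] := tg_distinct HT (subsetP sT _ hd).
have := last_face_vertex (vertex_of_face (face_rotr rS hd)).
rewrite eq_sym (negbTE n3d) (negbTE nd1) /= => /eqP Ed; subst d.
by case/andP: o23 => _ /negP; apply; apply: dedge_face (face_rotl rS hd).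
Qed.

Let adj_last x y : adj S x y -> [|| x == v3, x == v1 | x == v2].
Proof. by move/(adj_vertex rS); apply: last_face_vertex. Qed.

Let outer_edge13 : outer_edge S v1 v3.
Proof. by rewrite /outer_edge last_face_outer_next orbT. Qed.

Let outer_edge23 : outer_edge S v2 v3.
Proof. by rewrite /outer_edge o23. Qed.

Lemma indeg_last_face u : indeg (orient_at S v3) u = target_indeg S v1 v2 u.
Proof.
have /and3P [n12 n23 n31] := tg_distinct HT (subsetP sT _ last_face).
rewrite /indeg; case: (eqVneq u v3) => [->|nu3].
  have -> : [set x | oriented (orient_at S v3) x v3] = [set v1; v2].
    apply/setP=> x; rewrite !inE orient_atE eqxx.
    apply/idP/idP => [/andP [h1 _] | /orP [] /eqP ->].
    + by move: (adj_last h1); rewrite (negbTE (tg_adj_neq HT sT h1)).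
    + by rewrite outer_edge13 andbT; apply: outer_edge_adj.
    + by rewrite outer_edge23 andbT; apply: outer_edge_adj.
  rewrite cards2 n12 /target_indeg (negbTE n31) eq_sym (negbTE n23).
  by rewrite (outer_next_on_outer HT sT rS o23).
have -> : [set x | oriented (orient_at S v3) x u] = set0.
  apply/setP=> x; rewrite !inE orient_atE (negbTE nu3).
  apply/negP => /andP [h1 h2].
  have Ex : x = v3 by apply/eqP; case: (outer_edge S x u) h2.
  subst x; move: (adj_last (etrans (adjC S u v3) h1)) h2.
  by rewrite (negbTE nu3) /= outer_edgeC => /orP [] /eqP ->; rewrite ?outer_edge13 ?outer_edge23.
rewrite cards0; case: (boolP ((u == v1) || (u == v2))) => hu; first by rewrite /target_indeg hu.
rewrite target_indeg_off //; apply/negP => /last_face_vertex.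
by rewrite (negbTE nu3) (negbTE hu).
Qed.

Lemma good_orientation_last_face : good_orientation S v1 v2 (orient_at S v3).
Proof.
have /and3P [_ n23 n31] := tg_distinct HT (subsetP sT _ last_face).
have v3N : v3 \notin [set v1; v2] by rewrite !inE negb_or n31 eq_sym n23.
split; last exact: indeg_last_face.
- move=> x y; rewrite orient_atE => /andP [h1 h2]; rewrite h1 /=.
  apply: set2_neq v3N.
  by case: (outer_edge S x y) h2 => /eqP ->; rewrite !inE eqxx ?orbT.
- move=> x y h hb; have nxy := tg_adj_neq HT sT h.
  apply: (orient_at_once h nxy).
  move: (adj_last h) (adj_last (etrans (adjC S y x) h)) hb nxy.
  by do 2!case/or3P=> /eqP ->; rewrite ?eqxx ?orbT // setUC eqxx.
Qed.

End LastFace.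

Lemma run_base_dedge (V : finType) (T S : {set V * V * V}) v1 v2 O :
  triangular_graph T -> run S v1 v2 O -> S \subset T -> rot_closed S -> dedge S v1 v2.
Proof.
move=> HT; elim => {S v1 v2 O}.
- move=> S v1 v2 a b x y S1 S2 O1 O2 _ _ U _ _ o1 _ _ _ _ _ _ _ _.
  have sS1 : S1 \subset S by rewrite -U subsetUl.
  by case/andP: o1 => /(dedgeS sS1).
- by move=> S v1 v2 v3 _ o23 only3 sT rS; apply: dedge_face (last_face HT sT rS o23 only3).
- move=> S v1 v2 v3 O _ _ _ _ IH sT rS; apply: (dedgeS (delete_vertex_sub S v3)).
  apply: IH; last exact: rot_closed_delete.
  exact: subset_trans (delete_vertex_sub S v3) sT.
Qed.

Section DeleteCentral.
Variables (V : finType) (T S : {set V * V * V}) (v1 v2 v3 : V).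
Hypotheses (HT : triangular_graph T) (nS : near_triangulation T S).
Hypothesis o12 : outer_next S v1 v2.
Hypothesis no_chord : forall a b, ~~ chord S a b.
Hypothesis o23 : outer_next S v2 v3.
Hypothesis fourth : [exists w, [&& vertex_of S w, w != v3, w != v1 & w != v2]].
Implicit Types (u w x y z a b c : V).

Local Notation S' := (delete_vertex S v3).

Let sT := nt_sub nS.
Let rS := nt_rot nS.
Let uS := nt_outer_next_uniq nS.
Let cS := nt_connected nS.
Let inT t (h : t \in S) : t \in T := subsetP sT t h.

Lemma central_neq : [&& v1 != v2, v3 != v1 & v3 != v2].
Proof.
have [/dedgeP [c h12] n21] := andP o12; have [/dedgeP [d h23] _] := andP o23.
have /and3P [n12 _ _] := tg_distinct HT (inT h12).
have /and3P [n23 _ _] := tg_distinct HT (inT h23).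
rewrite n12 (eq_sym v3 v2) n23 andbT /=.
by apply: contraNneq n21 => <-; apply: dedge_face h23.
Qed.

Lemma on_outer_central : on_outer S v3.
Proof. exact: (outer_next_on_outer HT sT rS o23). Qed.

Lemma on_outer_base : on_outer S v1 && on_outer S v2.
Proof. by apply/andP; split; apply/existsP; [exists v2 | exists v3]. Qed.

Lemma outer_adj_outer_edge a b : adj S a b -> on_outer S a -> on_outer S b -> outer_edge S a b.
Proof. by move=> h ha hb; move: (no_chord a b); rewrite /chord h ha hb negbK. Qed.

Lemma no_outer_face x y z : (x, y, z) \in S ->
  ~~ dedge S y x -> ~~ dedge S z y -> ~~ dedge S x z -> False.
Proof.
move=> h n1 n2 n3; have H := outer_face_vertices HT sT rS uS cS h n1 n2 n3.
case/existsP: fourth => w /and4P [hw nw3 nw1 nw2].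
have /and3P [n12 n31 n32] := central_neq.
have /andP [/on_outer_vertex hv1 /on_outer_vertex hv2] := on_outer_base.
have hv3 := on_outer_vertex on_outer_central.
have inxyz q : vertex_of S q -> [|| q == x, q == y | q == z] by move/H; rewrite !inE -!orbA.
have sub : {subset [:: v1; v2; v3; w] <= [:: x; y; z]}.
  by move=> q; rewrite !inE => /or4P [] /eqP ->; apply: inxyz.
have U : uniq [:: v1; v2; v3; w].
  by rewrite /= !inE !negb_or n12 !(eq_sym _ v3) n31 n32 !(eq_sym _ w) nw1 nw2 nw3.
by have := uniq_leq_size U sub.
Qed.

Lemma delete_face x y z : (x, y, z) \in S -> x != v3 -> y != v3 -> z != v3 -> (x, y, z) \in S'.
Proof.
by move=> h nx ny nz; rewrite in_delete_vertex h /= !negb_or !(eq_sym v3) nx ny nz.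
Qed.

Lemma delete_face_neq x y z : (x, y, z) \in S' -> [&& x != v3, y != v3 & z != v3].
Proof. by rewrite in_delete_vertex /= !negb_or !(eq_sym v3) => /andP []. Qed.

Lemma adj_delete_neq x y : adj S' x y -> x != v3.
Proof. by case/orP=> /dedgeP [c /delete_face_neq /and3P []]. Qed.

Lemma outer_dedge_rev a b : dedge S a b -> on_outer S a -> on_outer S b -> ~~ dedge S b a.
Proof.
move=> h ha hb; have /orP [] := outer_adj_outer_edge (dedge_adj h) ha hb.
  by case/andP.
by case/andP=> _ /negP.
Qed.

Lemma central_opposite_faces x y : (v3, x, y) \in S -> (v3, y, x) \in S -> False.
Proof. by move=> h1 h2; move: (opposite_faces_inner HT sT rS h1 h2); rewrite on_outer_central. Qed.

Lemma adj_delete_face x y c : (x, y, c) \in S -> x != v3 -> y != v3 -> adj S' x y.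
Proof.
move=> h nx ny; case: (eqVneq c v3) => [Ec|nc]; last first.
  by rewrite /adj (dedge_face (delete_face h nx ny nc)).
subst c; case: (boolP (dedge S y x)) => [/dedgeP [d hd]|nyx].
  case: (eqVneq d v3) => [Ed|nd]; last by rewrite /adj (dedge_face (delete_face hd ny nx nd)) orbT.
  by subst d; case: (central_opposite_faces (face_rotr rS h) (face_rotr rS hd)).
have ox : on_outer S x by apply/existsP; exists y; rewrite /outer_next (dedge_face h).
have oy : on_outer S y.
  by apply: (outer_next_on_outer HT sT rS (b := x)); rewrite /outer_next (dedge_face h).
have n3y := outer_dedge_rev (dedge_face (face_rotl rS h)) oy on_outer_central.
have nx3 := outer_dedge_rev (dedge_face (face_rotr rS h)) on_outer_central ox.
by case: (no_outer_face h nyx n3y nx3).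
Qed.

Lemma adj_delete x y : adj S x y -> x != v3 -> y != v3 -> adj S' x y.
Proof.
case/orP=> /dedgeP [c h] nx ny; first exact: adj_delete_face h nx ny.
by rewrite adjC; apply: adj_delete_face h ny nx.
Qed.

Lemma outer_next_delete u b : outer_next S' u b -> outer_next S u b \/ (u, v3, b) \in S.
Proof.
case/andP=> /dedgeP [c hc] nbu.
have /and3P [nu nb _] := delete_face_neq hc.
have hcS := subsetP (delete_vertex_sub S v3) _ hc.
case: (boolP (dedge S b u)) => [/dedgeP [d hd]|nbu']; last first.
  by left; rewrite /outer_next (dedge_face hcS) nbu'.
right; case: (eqVneq d v3) => [Ed|nd]; first by subst d; apply: face_rotl rS hd.
by case/negP: nbu; apply: dedge_face (delete_face hd nb nu nd).
Qed.

Lemma outer_next_central_face u b b' : outer_next S u b -> (u, v3, b') \in S -> b = v3.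
Proof.
move=> hb hf; have ou : on_outer S u by apply/existsP; exists b.
have /orP [/(uS hb) //|/andP [_ /negP []]] :=
  outer_adj_outer_edge (dedge_adj (dedge_face hf)) ou on_outer_central.
exact: dedge_face hf.
Qed.

Lemma outer_next_uniq_delete : outer_next_uniq S'.
Proof.
have nv3 u b : outer_next S' u b -> b != v3.
  by case/andP=> /dedgeP [c /delete_face_neq /and3P []].
move=> u b b' h h'.
case: (outer_next_delete h) (outer_next_delete h') => [s1|f1] [s2|f2].
- exact: uS s1 s2.
- by move: (nv3 _ _ h); rewrite (outer_next_central_face s1 f2) eqxx.
- by move: (nv3 _ _ h'); rewrite (outer_next_central_face s2 f1) eqxx.
- exact: (tg_unique HT (inT f1) (inT f2)).
Qed.

Lemma adj_connected_delete : adj_connected S'.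
Proof.
have /existsP [s3 hs3] := on_outer_central.
have reach3 n : adj S v3 n -> connect (adj S') s3 n.
  move=> hn; apply: connect_sub (link_root_adj rS (link_connect_outer HT sT rS uS hs3) hn).
  move=> p q h; have /and3P [n3p npq nq3] := tg_distinct HT (inT h).
  by apply/connect1/(adj_delete_face (face_rotl rS h)); rewrite // eq_sym.
have hs3S : vertex_of S s3 by apply: (adj_vertex rS (y := v3)); rewrite adjC outer_next_adj.
have from_s3 z : vertex_of S' z -> connect (adj S') s3 z.
  move=> hz; have nz : z != v3.
    by case/(vertex_ofP _ (rot_closed_delete (v := v3) rS)): hz => x [y] /delete_face_neq /and3P [].
  pose P := [pred q | (q == v3) || connect (adj S') s3 q].
  suff /orP [/eqP Ez|//] : P z by rewrite Ez eqxx in nz.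
  apply: (connect_fwd (P := P) _ (cS hs3S (vertex_ofS (delete_vertex_sub S v3) hz)));
    last by rewrite /= connect0 orbT.
  move=> p q; case: (eqVneq p v3) => [->|np] hpq hp; first by rewrite /= (reach3 _ hpq) orbT.
  case: (eqVneq q v3) => [->|nq]; first by rewrite /= eqxx.
  case/orP: hp => [/eqP Ep|hp]; first by rewrite Ep eqxx in np.
  by rewrite /= (connect_trans hp (connect1 (adj_delete hpq np nq))) orbT.
have symm : connect_sym (adj S') := sym_connect_sym (adjC S').
by move=> a b ha hb; rewrite (connect_trans _ (from_s3 b hb)) // symm from_s3.
Qed.

Lemma near_triangulation_delete : near_triangulation T S'.
Proof.
split.
- exact: subset_trans (delete_vertex_sub S v3) sT.
- exact: rot_closed_delete.
- exact: outer_next_uniq_delete.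
- exact: adj_connected_delete.
Qed.

Section FarFromCentral.
Variable u : V.
Hypotheses (nu : u != v3) (nadj : ~~ adj S v3 u).

Lemma dedge_delete_far b : dedge S' u b = dedge S u b /\ dedge S' b u = dedge S b u.
Proof.
have /norP [n3u nu3] := nadj.
split; apply/idP/idP; try exact: dedgeS (delete_vertex_sub S v3).
- case/dedgeP=> c h; apply: dedge_face (delete_face h nu _ _).
    by apply: contraNneq nu3 => <-; apply: dedge_face h.
  by apply: contraNneq n3u => <-; apply: dedge_face (face_rotr rS h).
- case/dedgeP=> c h; apply: dedge_face (delete_face h _ nu _).
    by apply: contraNneq n3u => <-; apply: dedge_face h.
  by apply: contraNneq nu3 => <-; apply: dedge_face (face_rotl rS h).
Qed.

Lemma on_outer_delete_far : on_outer S' u = on_outer S u.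
Proof. by apply: eq_existsb => b; rewrite /outer_next; have [-> ->] := dedge_delete_far b. Qed.

Lemma vertex_of_delete_far : vertex_of S' u = vertex_of S u.
Proof.
apply/idP/idP; first exact: vertex_ofS (delete_vertex_sub S v3).
case/(vertex_ofP _ rS) => x [y] /dedge_face.
by have [<- _] := dedge_delete_far x; case/dedgeP=> c /vertex_of_face.
Qed.

End FarFromCentral.

Lemma outer_next_delete_face u x y : (u, v3, x) \in S -> (u, x, y) \in S -> outer_next S' u x.
Proof.
move=> h3 h; have /and3P [nu3 n3x _] := tg_distinct HT (inT h3).
have ny : y != v3.
  apply/eqP => Ey; subst y.
  exact: central_opposite_faces (face_rotr rS h) (face_rotl rS h3).
rewrite /outer_next (dedge_face (delete_face h nu3 _ ny)) 1?eq_sym //=.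
apply/negP => /dedgeP [d hd]; have /and3P [_ _ nd] := delete_face_neq hd.
have hdS := face_rotl rS (subsetP (delete_vertex_sub S v3) _ hd).
by rewrite (tg_unique_mid HT (inT hdS) (inT h3)) eqxx in nd.
Qed.

Lemma on_outer_delete_outer u : u != v3 -> on_outer S u -> on_outer S' u.
Proof.
move=> nu ou; case: (boolP (adj S v3 u)) => [a|na]; last by rewrite on_outer_delete_far.
case/orP: (outer_adj_outer_edge a on_outer_central ou) => /andP [/dedgeP [p hp] nuv].
  have hp' := face_rotr rS hp.
  case: (boolP (dedge S p u)) => [/dedgeP [q hq]|npu].
    have [sT' rS' _ _] := near_triangulation_delete.
    exact: (outer_next_on_outer HT sT' rS' (outer_next_delete_face hp' hq)).
  have op : on_outer S p.
    apply: (outer_next_on_outer HT sT rS (b := u)).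
    by rewrite /outer_next (dedge_face (face_rotl rS hp)).
  have n3p := outer_dedge_rev (dedge_face hp') op on_outer_central.
  by case: (no_outer_face (face_rotl rS hp) npu n3p nuv).
case: (boolP (dedge S u p)) => [/dedgeP [q hq]|nup].
  by apply/existsP; exists p; apply: outer_next_delete_face hp hq.
have op : on_outer S p.
  by apply/existsP; exists u; rewrite /outer_next (dedge_face (face_rotr rS hp)).
have np3 := outer_dedge_rev (dedge_face (face_rotl rS hp)) on_outer_central op.
by case: (no_outer_face hp nuv np3 nup).
Qed.

Lemma on_outer_delete_inner_nbr u : u != v3 -> ~~ on_outer S u -> vertex_of S u ->
  adj S v3 u -> on_outer S' u.
Proof.
move=> nu no /(vertex_ofP _ rS) [x0 [y0 /dedge_face h0]] a.
have du3 : dedge T u v3.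
  by case/orP: a => /(dedgeS sT) // /(tg_sym HT).
have /dedgeP [x hx] := inner_dedge_full HT sT rS no h0 du3.
have /dedgeP [y hy] := inner_dedge_full HT sT rS no h0 (tg_dedge_last HT (inT hx)).
by apply/existsP; exists x; apply: outer_next_delete_face hx hy.
Qed.

Lemma target_indeg_delete u : u != v3 ->
  target_indeg S v1 v2 u = (adj S v3 u && ~~ outer_edge S v3 u) + target_indeg S' v1 v2 u.
Proof.
move=> nu; have outer_nbr : on_outer S u -> adj S v3 u && ~~ outer_edge S v3 u = false.
  move=> ou; case: (boolP (adj S v3 u)) => //= a.
  by rewrite (outer_adj_outer_edge a on_outer_central ou).
rewrite /target_indeg; case: ifP => [h12|_].
  by rewrite outer_nbr //; case/andP: on_outer_base; case/orP: h12 => /eqP ->.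
case: (boolP (on_outer S u)) => ou; first by rewrite outer_nbr // on_outer_delete_outer.
case: (boolP (vertex_of S u)) => vu; last first.
  have na : ~~ adj S v3 u by apply: contra vu; rewrite adjC; apply: adj_vertex.
  by rewrite (negbTE na) on_outer_delete_far // vertex_of_delete_far // (negbTE ou) (negbTE vu).
case: (boolP (adj S v3 u)) => /= a; last first.
  by rewrite on_outer_delete_far // vertex_of_delete_far // (negbTE ou) vu.
have -> : outer_edge S v3 u = false.
  apply/negbTE; apply: contra ou => /orP [/(outer_next_on_outer HT sT rS) //|o].
  by apply/existsP; exists v3.
by rewrite (on_outer_delete_inner_nbr nu ou vu a).
Qed.

Section DeleteOrientation.
Variable O : {set V * V * 'I_3}.
Hypothesis gO : good_orientation S' v1 v2 O.

Lemma oriented_delete_neq x y : oriented O x y -> (x != v3) && (y != v3).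
Proof.
case/(oriented_adj gO)/andP => a _.
by rewrite (adj_delete_neq a) (adj_delete_neq (etrans (adjC S' y x) a)).
Qed.

Lemma indeg_central : indeg (orient_at S v3 :|: O) v3 = target_indeg S v1 v2 v3.
Proof.
have /existsP [s3 hs3] := on_outer_central.
rewrite /indeg; have -> : [set x | oriented (orient_at S v3 :|: O) x v3] = [set s3; v2].
  apply/setP => x; rewrite !inE oriented_setU orient_atE eqxx.
  have -> : oriented O x v3 = false.
    by apply/negbTE/negP => /oriented_delete_neq; rewrite eqxx andbF.
  rewrite orbF; apply/idP/idP => [/andP [a]|/orP [] /eqP ->].
  - rewrite (negbTE (tg_adj_neq HT sT a)); case: ifP => // /orP [o|o] _.
      by rewrite (outer_prev_uniq HT sT rS uS o o23) eqxx orbT.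
    by rewrite (uS hs3 o) eqxx.
  - by rewrite adjC outer_next_adj // /outer_edge hs3 orbT.
  - by rewrite outer_next_adj // /outer_edge o23.
have ns3 : s3 != v2.
  by apply: contraNneq (proj2 (andP o23)) => <-; case/andP: hs3.
have /and3P [_ n31 n32] := central_neq.
by rewrite cards2 ns3 /target_indeg (negbTE n31) (negbTE n32) on_outer_central.
Qed.

Lemma indeg_delete u : u != v3 ->
  indeg (orient_at S v3 :|: O) u = (adj S v3 u && ~~ outer_edge S v3 u) + indeg O u.
Proof.
move=> nu; pose c := adj S v3 u && ~~ outer_edge S v3 u.
have v3N : v3 \notin [set x | oriented O x u].
  by rewrite inE; apply/negP => /oriented_delete_neq; rewrite eqxx.
rewrite /indeg; have -> : [set x | oriented (orient_at S v3 :|: O) x u] =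
          if c then v3 |: [set x | oriented O x u] else [set x | oriented O x u].
  apply/setP => x; rewrite inE oriented_setU orient_atE (negbTE nu).
  case: (eqVneq x v3) => [->|nx]; last by case: (c); rewrite !inE ?(negbTE nx) if_same andbF.
  by rewrite /c; case: (adj S v3 u); case: (outer_edge S v3 u); rewrite /= ?inE ?eqxx.
by rewrite /c; case: (adj S v3 u && _); rewrite ?cardsU1 ?v3N.
Qed.

Lemma good_orientation_delete : good_orientation S v1 v2 (orient_at S v3 :|: O).
Proof.
have /and3P [_ n31 n32] := central_neq.
have v3N : v3 \notin [set v1; v2] by rewrite !inE negb_or n31 n32.
have off3 x y : ~~ ((x == v3) || (y == v3)) ->
    oriented (orient_at S v3) x y = false.
  by rewrite orient_atE negb_or => /andP [/negbTE -> /negbTE ->]; rewrite if_same andbF.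
have offO x y : (x == v3) || (y == v3) -> oriented O x y = false.
  by move=> h; apply/negbTE/negP => /oriented_delete_neq; rewrite -negb_or h.
split.
- move=> x y; rewrite oriented_setU; case: (boolP ((x == v3) || (y == v3))) => hv.
    rewrite offO // orbF orient_atE => /andP [-> _] /=.
    by apply: set2_neq v3N; case/orP: hv => /eqP ->; rewrite !inE eqxx ?orbT.
  by rewrite off3 // => /(oriented_adj gO) /andP [/(adjS (delete_vertex_sub S v3)) -> ->].
- move=> x y a hb; rewrite !oriented_setU.
  case: (boolP ((x == v3) || (y == v3))) => hv.
    have hv' : (y == v3) || (x == v3) by rewrite orbC.
    rewrite (offO x y hv) (offO y x hv') !orbF.
    exact: orient_at_once a (tg_adj_neq HT sT a) hv.
  have hv' : ~~ ((y == v3) || (x == v3)) by rewrite orbC.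
  rewrite (off3 x y hv) (off3 y x hv') /=; apply: (oriented_once gO) hb.
  by move: hv; rewrite negb_or => /andP [nx ny]; apply: adj_delete.
- move=> u; case: (eqVneq u v3) => [->|nu]; first exact: indeg_central.
  by rewrite indeg_delete // target_indeg_delete // (indeg_target gO).
Qed.

End DeleteOrientation.
End DeleteCentral.

Definition split_along (V : finType) (S Sa Sb : {set V * V * V}) (a b : V) : Prop :=
  [/\ Sa :|: Sb = S, Sa :&: Sb = set0, rot_closed Sa, rot_closed Sb &
      forall p q r r', (p, q, r) \in Sa -> (q, p, r') \in Sb -> [set p; q] = [set a; b]].

Lemma split_alongC (V : finType) (S Sa Sb : {set V * V * V}) a b :
  split_along S Sa Sb a b -> split_along S Sb Sa a b.
Proof.
case=> U I ra rb cr; split; [by rewrite setUC | by rewrite setIC | done | done | ].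
by move=> p q r r' hb ha; rewrite setUC; apply: cr ha hb.
Qed.

Definition corner_in (V : finType) (S Sa : {set V * V * V}) (u z : V) : bool :=
  [forall q, ((u, z, q) \in S) ==> ((u, z, q) \in Sa)].

Section SplitSide.
Variables (V : finType) (T S Sa Sb : {set V * V * V}) (a b : V).
Hypotheses (HT : triangular_graph T) (nS : near_triangulation T S).
Hypothesis sp : split_along S Sa Sb a b.
Implicit Types (u w x y z p q r : V).

Let inT t (h : t \in S) : t \in T := subsetP (nt_sub nS) t h.

Lemma in_split t : (t \in S) = (t \in Sa) || (t \in Sb).
Proof. by case: sp => <- *; rewrite inE. Qed.

Lemma split_sub : Sa \subset S.
Proof. by case: sp => <- *; apply: subsetUl. Qed.

Lemma split_rot : rot_closed Sa.
Proof. by case: sp. Qed.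

Lemma split_disjoint t : t \in Sa -> t \in Sb -> False.
Proof. by case: sp => _ I _ _ _ ha hb; move: (in_setI t Sa Sb); rewrite I inE ha hb. Qed.

Lemma split_cross p q r r' : (p, q, r) \in Sa -> (q, p, r') \in Sb -> [set p; q] = [set a; b].
Proof. by case: sp => _ _ _ _; apply. Qed.

Lemma corner_in_face u z c : (u, z, c) \in Sa -> corner_in S Sa u z.
Proof.
move=> h; apply/forallP => q; apply/implyP => hq.
by rewrite (tg_unique HT (inT hq) (inT (subsetP split_sub _ h))).
Qed.

Lemma corner_in_step u p q : link S u p q -> corner_in S Sa u p ->
  [set q; u] != [set a; b] -> corner_in S Sa u q.
Proof.
move=> hpq /forallP /(_ q); rewrite (hpq : (u, p, q) \in S) /= => hp nab.
apply/forallP => q2; apply/implyP; rewrite in_split => /orP [//|hb].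
by rewrite (split_cross (face_rotr split_rot hp) hb) eqxx in nab.
Qed.

Lemma link_side u r q0 : u \notin [set a; b] -> (u, r, q0) \in Sa ->
  forall z, connect (link S u) r z -> forall q, (u, z, q) \in S -> (u, z, q) \in Sa.
Proof.
move=> nab h0 z hc; suff /forallP H : corner_in S Sa u z by move=> q hq; move: (H q); rewrite hq.
apply: (connect_fwd _ hc (corner_in_face h0)) => p q hpq hp.
by apply: corner_in_step hpq hp _; apply: set2_neq nab; rewrite set22.
Qed.

End SplitSide.

Lemma split_vertex_of_both (V : finType) (T S Sa Sb : {set V * V * V}) a b u :
  triangular_graph T -> near_triangulation T S -> split_along S Sa Sb a b ->
  u \notin [set a; b] -> vertex_of Sa u -> vertex_of Sb u -> False.
Proof.
move=> HT nS sp nab.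
have [sT rS uS _] := nS; have [_ _ ra rb _] := sp.
move=> /(vertex_ofP _ ra) [x [y hx]] /(vertex_ofP _ rb) [x' [y' hx']].
have hxS := subsetP (split_sub sp) _ hx.
have hx'S := subsetP (split_sub (split_alongC sp)) _ hx'.
have [r /dedgeP [r' hr] R] := link_root HT sT rS uS (dedge_face hxS).
move: (hr); rewrite (in_split sp) => /orP [ha|hb].
  exact (split_disjoint sp (link_side HT nS sp nab ha (R _ (dedge_face hx'S)) hx'S) hx').
exact (split_disjoint sp hx (link_side HT nS (split_alongC sp) nab hb (R _ (dedge_face hxS)) hxS)).
Qed.

Section SideNearTriangulation.
Variables (V : finType) (T S Sa Sb : {set V * V * V}) (a b : V).
Hypotheses (HT : triangular_graph T) (nS : near_triangulation T S).
Hypothesis sp : split_along S Sa Sb a b.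
Implicit Types (u w x y z p q r : V).

Let sT := nt_sub nS.
Let rS := nt_rot nS.
Let uS := nt_outer_next_uniq nS.
Let ra := split_rot sp.
Let sTa : Sa \subset T := subset_trans (split_sub sp) sT.
Let inT t (h : t \in S) : t \in T := subsetP sT t h.

Lemma face_side u t : u \notin [set a; b] -> vertex_of Sa u -> t \in S -> in_tri u t -> t \in Sa.
Proof.
move=> nab hv; rewrite (in_split sp) => /orP [//|hb] ht.
by case: (split_vertex_of_both HT nS sp nab hv); apply/existsP; exists t; rewrite hb.
Qed.

Lemma dedge_side u w : u \notin [set a; b] -> vertex_of Sa u ->
  dedge Sa u w = dedge S u w /\ dedge Sa w u = dedge S w u.
Proof.
move=> nab hv; split; apply/idP/idP; try exact: dedgeS (split_sub sp).
  case/dedgeP=> c h; apply: (dedge_face (c := c)).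
  by apply: face_side nab hv h _; rewrite /= eqxx.
case/dedgeP=> c h; apply: (dedge_face (c := c)).
by apply: face_side nab hv h _; rewrite /= eqxx orbT.
Qed.

Lemma on_outer_side u : u \notin [set a; b] -> vertex_of Sa u -> on_outer Sa u = on_outer S u.
Proof.
move=> nab hv; apply: eq_existsb => w.
by rewrite /outer_next; have [-> ->] := dedge_side w nab hv.
Qed.

Lemma adj_split p q : adj S p q = adj Sa p q || adj Sb p q.
Proof.
have dedge_split x y : dedge S x y = dedge Sa x y || dedge Sb x y.
  apply/idP/orP => [/dedgeP [c]|[] h]; last 2 first.
  - exact: dedgeS (split_sub sp) h.
  - exact: dedgeS (split_sub (split_alongC sp)) h.
  by rewrite (in_split sp) => /orP [] /dedge_face; [left | right].
by rewrite /adj !dedge_split orbACA.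
Qed.

Lemma outer_next_side u z : outer_next Sa u z -> outer_next S u z \/ [set u; z] = [set a; b].
Proof.
case/andP=> hz nz; case: (boolP (dedge S z u)) => [/dedgeP [c hc]|n]; last first.
  by left; rewrite /outer_next (dedgeS (split_sub sp) hz) n.
have hb : (z, u, c) \in Sb.
  by move: hc; rewrite (in_split sp) => /orP [/dedge_face hza|//]; rewrite hza in nz.
by right; case/dedgeP: hz => c0 h0; have [_ _ _ _ cr] := sp; apply: cr h0 hb.
Qed.

Lemma outer_next_side_chord u z z' : outer_next S u z -> outer_next Sa u z ->
  [set u; z'] = [set a; b] -> outer_next Sa u z' -> z = z'.
Proof.
move=> hs ha E /andP [hz' nz']; case: (eqVneq z z') => // nzz'.
have hz'S := dedgeS (split_sub sp) hz'.
have /dedgeP [p hp] : dedge S z' u.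
  by apply: contraNT nzz' => n; apply/eqP/(uS hs); rewrite /outer_next hz'S n.
have hpb : (z', u, p) \in Sb.
  by move: hp; rewrite (in_split sp) => /orP [/dedge_face h|//]; rewrite h in nz'.
have [c hc] := dedgeP _ _ _ (proj1 (andP ha)).
have step p1 q1 : link S u p1 q1 -> corner_in S Sa u p1 -> q1 != z' -> corner_in S Sa u q1.
  move=> hpq hp1 nq; apply: (corner_in_step sp hpq hp1); rewrite -E.
  have /and3P [_ _ nqu] := tg_distinct HT (inT hpq).
  by apply: (set2_neq (v := q1)); rewrite !inE ?eqxx // negb_or nqu.
have [p' hp' /forallP /(_ z')] := connect_enter step (link_connect_outer HT sT rS uS hs hz'S)
  nzz' (corner_in_face HT nS sp hc).
have hpS : (u, p, z') \in S := face_rotl rS hp.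
rewrite (tg_unique_mid HT (inT hp') (inT hpS)) hpS /= => /(face_rotr ra) hpa.
by case: (split_disjoint sp hpa hpb).
Qed.

Lemma outer_next_uniq_side : outer_next_uniq Sa.
Proof.
move=> u z z' h h'.
case: (outer_next_side h) (outer_next_side h') => [s1|p1] [s2|p2].
- exact: uS s1 s2.
- exact: outer_next_side_chord s1 h p2 h'.
- by symmetry; apply: outer_next_side_chord s2 h' p1 h.
have nuz : u != z by case/andP: h => /(dedgeS sTa) /(tg_neq_dedge HT).
by move: (set22 u z); rewrite p1 -p2 !inE eq_sym (negbTE nuz) => /eqP.
Qed.

Lemma adj_connected_side : adj Sa a b -> adj_connected Sa.
Proof.
move=> hab; have va : vertex_of Sa a := adj_vertex ra hab.
have both q : vertex_of Sa q -> vertex_of Sb q -> connect (adj Sa) a q.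
  move=> h1 h2; case: (boolP (q \in [set a; b])) => [|nq]; last first.
    by case: (split_vertex_of_both HT nS sp nq h1 h2).
  by rewrite !inE => /orP [] /eqP ->; [apply: connect0 | apply: connect1].
pose P := [pred q | (vertex_of Sb q && ~~ vertex_of Sa q) ||
                    (vertex_of Sa q && connect (adj Sa) a q)].
have from_a w : vertex_of Sa w -> connect (adj Sa) a w.
  move=> hw.
  suff /orP [/andP [_ /negP //]|/andP [_ ->]] : P w by [].
  apply: (connect_fwd (P := P) _ (nt_connected nS (vertex_ofS (split_sub sp) va)
    (vertex_ofS (split_sub sp) hw))); last by rewrite /= va connect0 orbT.
  move=> p q; rewrite adj_split => /orP [hA|hB] Pp.
    have vq : vertex_of Sa q by apply: (adj_vertex ra (y := p)); rewrite adjC.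
    move/orP: Pp => [/andP [_ /negP []]|/andP [_ cp]]; first exact: adj_vertex ra hA.
    by rewrite /= vq (connect_trans cp (connect1 hA)) orbT.
  have vq : vertex_of Sb q.
    by apply: (adj_vertex (split_rot (split_alongC sp)) (y := p)); rewrite adjC.
  by case: (boolP (vertex_of Sa q)) => vqa; rewrite /= vq vqa /= ?both.
have symm : connect_sym (adj Sa) := sym_connect_sym (adjC Sa).
by move=> x y hx hy; rewrite (connect_trans _ (from_a y hy)) // symm from_a.
Qed.

Lemma near_triangulation_side : adj Sa a b -> near_triangulation T Sa.
Proof.
move=> hab; split; first exact: sTa.
- exact: ra.
- exact: outer_next_uniq_side.
- exact: adj_connected_side.
Qed.

Lemma target_indeg_side w1 w2 u : u \notin [set a; b] -> vertex_of Sa u ->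
  target_indeg Sa w1 w2 u = target_indeg S w1 w2 u.
Proof.
by move=> nab hv; rewrite /target_indeg on_outer_side // hv (vertex_ofS (split_sub sp) hv).
Qed.

End SideNearTriangulation.

Lemma set2_eq_sym (T : finType) (R : Type) (f : T -> T -> R) p q a b :
  (forall x y, f x y = f y x) -> [set p; q] = [set a; b] -> f p q = f a b.
Proof. by move=> fC /set2_eq /orP [] /andP [/eqP -> /eqP ->]. Qed.

Section Chord.
Variables (V : finType) (T S S1 S2 : {set V * V * V}) (v1 v2 a b x y : V).
Hypotheses (HT : triangular_graph T) (nS : near_triangulation T S).
Hypothesis o12 : outer_next S v1 v2.
Hypothesis ch : chord S a b.
Hypotheses (r1 : rot_closed S1) (U : S1 :|: S2 = S) (I : S1 :&: S2 = set0).
Hypothesis cross :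
  forall p q r r', (p, q, r) \in S1 -> (q, p, r') \in S2 -> [set p; q] = [set a; b].
Hypothesis o1 : outer_next S1 v1 v2.
Hypothesis xy : [set x; y] = [set a; b].
Hypothesis o2 : outer_next S2 x y.
Implicit Types (u w z p q r : V).

Let sT := nt_sub nS.
Let rS := nt_rot nS.

Lemma chord_split : split_along S S1 S2 a b.
Proof.
split=> // t h2; have hS : t \in S by rewrite -U inE h2 orbT.
move: (rS hS); rewrite -U inE => /orP [/r1 /r1 h1|//].
have : t \in S1 :&: S2 by rewrite inE h2 -(rot3_id t) h1.
by rewrite I inE.
Qed.

Let sp := chord_split.
Let sp' := split_alongC chord_split.

Lemma chord_reverse_face : exists d, (y, x, d) \in S1.
Proof.
case/andP: o2 => /dedgeP [c hc] n2.
have : ~~ outer_next S x y.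
  have [_ _ _ nab] := and4P ch; apply: contra nab => h.
  by rewrite -(set2_eq_sym (outer_edgeC S) xy) /outer_edge h.
rewrite /outer_next (dedgeS (split_sub sp') (dedge_face hc)) /= negbK => /dedgeP [d hd].
by exists d; move: hd; rewrite (in_split sp) => /orP [//|/dedge_face h]; rewrite h in n2.
Qed.

Lemma adj_chord1 : adj S1 a b.
Proof.
case: chord_reverse_face => d h.
by rewrite -(set2_eq_sym (adjC S1) xy) /adj (dedge_face h) orbT.
Qed.

Lemma adj_chord2 : adj S2 a b.
Proof. by case/andP: o2 => h _; rewrite -(set2_eq_sym (adjC S2) xy) /adj h. Qed.

Lemma same_face_sides p q r r' : (p, q, r) \in S1 -> (p, q, r') \in S2 -> False.
Proof.
move=> h1 h2; move: (h1).
rewrite (tg_unique HT (subsetP sT _ (subsetP (split_sub sp) _ h1))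
                      (subsetP sT _ (subsetP (split_sub sp') _ h2))) => h1'.
exact: (split_disjoint sp h1' h2).
Qed.

Lemma on_outer_chord1 u : u \in [set a; b] -> on_outer S1 u.
Proof.
have [d hd] := chord_reverse_face.
have oyx : outer_next S1 y x.
  rewrite /outer_next (dedge_face hd) /=; apply/negP => /dedgeP [c hc].
  case/andP: o2 => /dedgeP [c' hc'] _.
  by case: (same_face_sides hc hc').
rewrite -xy !inE => /orP [] /eqP ->; last by apply/existsP; exists x.
exact: (outer_next_on_outer HT (subset_trans (split_sub sp) sT) r1 oyx).
Qed.

Lemma adj_both_sides p q : adj S1 p q -> adj S2 p q -> [set p; q] = [set a; b].
Proof.
case/orP=> /dedgeP [r h1]; case/orP=> /dedgeP [r' h2].
- by case: (same_face_sides h1 h2).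
- exact: cross h1 h2.
- by rewrite setUC; apply: cross h1 h2.
- by case: (same_face_sides h1 h2).
Qed.

Lemma base_not_chord : [set v1; v2] != [set a; b].
Proof.
apply/eqP => E; have [_ _ _ /negP []] := and4P ch.
by rewrite -(set2_eq_sym (outer_edgeC S) E) /outer_edge o12.
Qed.

Lemma target_indeg_split u :
  target_indeg S v1 v2 u = target_indeg S1 v1 v2 u + target_indeg S2 x y u.
Proof.
have hv1 : vertex_of S1 v1 by case/andP: o1 => /dedgeP [c /vertex_of_face].
have hv2 : vertex_of S1 v2 by case/andP: o1 => /dedgeP [c /(face_rotl r1) /vertex_of_face].
have not2 w : w \notin [set a; b] -> vertex_of S1 w -> target_indeg S2 x y w = 0.
  by move=> nab h1; apply: target_indeg_off; apply/negP => /(split_vertex_of_both HT nS sp nab h1).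
case: (boolP (u \in [set a; b])) => hab.
  have -> : target_indeg S2 x y u = 0 by rewrite /target_indeg -in_set2 xy hab.
  have [_ oa ob _] := and4P ch.
  have ou : on_outer S u by move: hab; rewrite !inE => /orP [] /eqP ->.
  by rewrite addn0 /target_indeg ou on_outer_chord1.
case: (boolP (vertex_of S1 u)) => h1.
  by rewrite not2 // addn0 (target_indeg_side HT nS sp).
have n12 : (u == v1) || (u == v2) = false.
  by apply/negbTE; apply: contra h1 => /orP [] /eqP ->.
case: (boolP (vertex_of S2 u)) => h2.
  rewrite (target_indeg_off (S := S1)) // (target_indeg_side HT nS sp') //.
  by rewrite /target_indeg n12 -in_set2 xy (negbTE hab).
rewrite !target_indeg_off //; apply/negP => /existsP [t /andP [ht hin]].
by move: ht; rewrite (in_split sp) => /orP [] ht; [case/negP: h1 | case/negP: h2];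
  apply/existsP; exists t; rewrite ht.
Qed.

Lemma near_triangulation_chord : near_triangulation T S1 /\ near_triangulation T S2.
Proof.
split; first exact: near_triangulation_side sp adj_chord1.
exact: near_triangulation_side sp' adj_chord2.
Qed.

Lemma good_orientation_split O1 O2 : good_orientation S1 v1 v2 O1 -> good_orientation S2 x y O2 ->
  good_orientation S v1 v2 (O1 :|: O2).
Proof.
case=> A1 A2 A3 [B1 B2 B3]; rewrite xy in B1 B2.
have sub1 := split_sub sp; have sub2 := split_sub sp'.
have off1 p q : ~~ adj S1 p q -> oriented O1 p q = false.
  by move=> n; apply/negbTE; apply: contra n => /A1 /andP [].
have off2 p q : ~~ adj S2 p q -> oriented O2 p q = false.
  by move=> n; apply/negbTE; apply: contra n => /B1 /andP [].
have chord_off p q : [set p; q] = [set a; b] -> oriented O2 p q = false.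
  by move=> E; apply/negbTE/negP => /B1 /andP [_]; rewrite E eqxx.
split.
- move=> p q; rewrite oriented_setU => /orP [/A1 /andP [a1 ->]|/B1 /andP [a2 _]].
    by rewrite (adjS sub1 a1).
  rewrite (adjS sub2 a2) /=; apply: contra_neq base_not_chord => E.
  by rewrite -E adj_both_sides // (set2_eq_sym (adjC S1) E) outer_next_adj.
- move=> p q a0 hb; rewrite !oriented_setU.
  case: (eqVneq [set p; q] [set a; b]) => [E|nab].
    rewrite (chord_off p q E) (chord_off q p (etrans (setUC _ _) E)) !orbF.
    by apply: A2 hb; rewrite (set2_eq_sym (adjC S1) E) adj_chord1.
  move: (a0); rewrite (adj_split sp) => /orP [h1|h2].
    have n2 : ~~ adj S2 p q by apply: contra nab => h2; apply/eqP/adj_both_sides.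
    by rewrite (off2 p q n2) (off2 q p) ?(adjC S2 q p) // !orbF; apply: A2.
  have n1 : ~~ adj S1 p q by apply: contra nab => h1; apply/eqP/adj_both_sides.
  by rewrite (off1 p q n1) (off1 q p) ?(adjC S1 q p) //=; apply: B2.
- move=> u; rewrite target_indeg_split -A3 -B3 /indeg.
  have -> : [set z | oriented (O1 :|: O2) z u] =
            [set z | oriented O1 z u] :|: [set z | oriented O2 z u].
    by apply/setP => z; rewrite !inE oriented_setU.
  rewrite cardsU (_ : _ :&: _ = set0) ?cards0 ?subn0 //.
  apply/setP => z; rewrite !inE; apply/negP => /andP [/A1 /andP [a1 _] /B1 /andP [a2]].
  by rewrite (adj_both_sides a1 a2) eqxx.
Qed.

End Chord.

Lemma good_orientation_run (V : finType) (T S : {set V * V * V}) v1 v2 O :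
  triangular_graph T -> run S v1 v2 O -> near_triangulation T S -> outer_next S v1 v2 ->
  good_orientation S v1 v2 O.
Proof.
move=> HT; elim => {S v1 v2 O}.
- move=> S v1 v2 a b x y S1 S2 O1 O2 ch r1 U I cr o1 xy o2 _ IH1 _ IH2 nS o12.
  have [n1 n2] := near_triangulation_chord HT nS ch r1 U I cr xy o2.
  exact: (good_orientation_split HT nS o12 ch r1 U I cr o1 xy o2 (IH1 n1 o1) (IH2 n2 o2)).
- move=> S v1 v2 v3 _ o23 only3 [sT rS _ _] _.
  exact: (good_orientation_last_face HT sT rS o23 only3).
- move=> S v1 v2 v3 O nch o23 fourth run' IH nS o12.
  apply: (good_orientation_delete HT nS o12 nch o23 fourth).
  have nS' := near_triangulation_delete HT nS o12 nch o23 fourth.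
  apply: (IH nS'); rewrite /outer_next (run_base_dedge HT run' (nt_sub nS') (nt_rot nS')) /=.
  by case/andP: o12 => _; apply: contra; apply: dedgeS (delete_vertex_sub S v3).
Qed.

Section InnerFaces.
Variables (V : finType) (T : {set V * V * V}) (p q r : V).
Hypotheses (HT : triangular_graph T) (oT : (p, q, r) \in T).
Implicit Types (u v w x y z a b c : V).

Local Notation o := (p, q, r).
Local Notation S := (inner_faces T o).

Let opq : [&& p != q, q != r & r != p] := tg_distinct HT oT.

Lemma outer_facesP t :
  reflect [\/ t = (p, q, r), t = (q, r, p) | t = (r, p, q)] (t \in outer_faces o).
Proof. by rewrite !inE -orbA; apply: (iffP or3P) => -[] /eqP; constructor. Qed.

Lemma in_inner_faces t : (t \in S) = (t \in T) && (t \notin outer_faces o).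
Proof. by rewrite inE andbC. Qed.

Lemma inner_faces_sub : S \subset T.
Proof. by apply/subsetP => t; rewrite in_inner_faces => /andP []. Qed.

Lemma inner_faces_rot : rot_closed S.
Proof.
move=> [[a b] c]; rewrite !in_inner_faces => /andP [h n] /=.
rewrite (face_rotl (tg_rot HT) h); apply: contra n => /outer_facesP.
case=> [[-> -> ->]|[-> -> ->]|[-> -> ->]]; apply/outer_facesP.
- by constructor 3.
- by constructor 1.
- by constructor 2.
Qed.

Lemma outer_next_inner u b : outer_next S u b -> exists c, (b, u, c) \in outer_faces o.
Proof.
case/andP=> h n; have /dedgeP [c hc] := tg_sym HT (dedgeS inner_faces_sub h).
exists c; apply: contraNT n => nc; apply: (dedge_face (c := c)).
by rewrite in_inner_faces hc.
Qed.

Lemma outer_next_inner_tri u b : outer_next S u b -> in_tri u o && in_tri b o.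
Proof.
by case/outer_next_inner=> c /outer_facesP [] [-> -> _]; rewrite /= !eqxx ?orbT.
Qed.

Lemma outer_next_uniq_inner : outer_next_uniq S.
Proof.
move=> u b b' /outer_next_inner [c hc] /outer_next_inner [c' hc'].
case/and3P: opq => d1 d2 d3.
by move: hc hc' => /outer_facesP [] [? ? ?] /outer_facesP [] [? ? ?]; subst;
  rewrite ?eqxx in d1 d2 d3 *.
Qed.

Lemma adj_inner_faces x y : adj S x y = adj T x y.
Proof.
apply/idP/idP; first exact: adjS inner_faces_sub.
move=> h; have [/dedgeP [c hc] /dedgeP [d hd]] : dedge T x y /\ dedge T y x.
  by case/orP: h => h; split=> //; apply: (tg_sym HT).
case: (boolP ((x, y, c) \in outer_faces o)) => n1; last first.
  by rewrite /adj (dedge_face (S := S) (a := x) (c := c) _) // in_inner_faces hc n1.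
case: (boolP ((y, x, d) \in outer_faces o)) => n2; last first.
  by rewrite /adj (dedge_face (S := S) (a := y) (c := d) _) ?orbT // in_inner_faces hd n2.
case/and3P: opq => d1 d2 d3.
by move: n1 n2 => /outer_facesP [] [? ? ?] /outer_facesP [] [? ? ?]; subst;
  rewrite ?eqxx in d1 d2 d3 *.
Qed.

Lemma near_triangulation_inner : near_triangulation T S.
Proof.
split; [exact: inner_faces_sub | exact: inner_faces_rot | exact: outer_next_uniq_inner |].
move=> a b _ _; rewrite (eq_connect (e' := adj T)); first exact: tg_conn HT a b.
by move=> x y; rewrite /= adj_inner_faces.
Qed.

Lemma target_indeg_interior v1 v2 v : outer_next S v1 v2 -> interior_vertex o v ->
  target_indeg S v1 v2 v = 3.
Proof.
move=> o12 hv; have /andP [h1 h2] := outer_next_inner_tri o12.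
have [w hw] := tg_cover HT v.
rewrite /target_indeg (adj_vertex inner_faces_rot (y := w)) ?adj_inner_faces //.
have -> : on_outer S v = false.
  apply/negbTE/negP => /existsP [b /outer_next_inner_tri /andP [hvo _]].
  by rewrite /interior_vertex hvo in hv.
by case: ifP => // /orP [] /eqP Ev; rewrite Ev /interior_vertex ?h1 ?h2 in hv.
Qed.

Lemma internal_3_orientation_good v1 v2 O : outer_next S v1 v2 ->
  good_orientation S v1 v2 O -> internal_3_orientation T o (interior_restriction T o O).
Proof.
move=> o12 [G1 G2 G3]; have /andP [h1 h2] := outer_next_inner_tri o12.
have memA x y : ((x, y) \in interior_restriction T o O) = interior_edge T o x y && oriented O x y.
  by rewrite inE.
have interior_off_base x y : interior_edge T o x y -> [set x; y] != [set v1; v2].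
  have base_out w : interior_vertex o w -> w \notin [set v1; v2].
    by apply: contraL; rewrite !inE /interior_vertex => /orP [] /eqP ->; rewrite ?h1 ?h2.
  case/andP=> _ /orP [] /base_out; [apply: set2_neq; apply: set21 | apply: set2_neq; apply: set22].
split.
- by move=> x y; rewrite memA => /andP [].
- move=> x y hi; rewrite !memA hi.
  have -> : interior_edge T o y x by move: hi; rewrite /interior_edge adjC orbC.
  have a : adj S x y by rewrite adj_inner_faces; case/andP: hi.
  move: (G2 x y a (interior_off_base _ _ hi)).
  by case: (oriented O x y); case: (oriented O y x).
- move=> v hv; rewrite -(target_indeg_interior o12 hv) -G3.
  congr #|pred_of_set _|; apply/setP => x; rewrite [LHS]inE [RHS]inE memA.
  apply/andP/idP => [[] //|h]; split=> //.
  have /andP [a _] := G1 _ _ h.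
  by rewrite /interior_edge -adj_inner_faces a hv orbT.
Qed.

End InnerFaces.

Theorem proposition4p1 (V : finType) (T : {set V * V * V}) (o : V * V * V)
    (v1 v2 : V) (O : {set V * V * 'I_3}) :
  triangular_graph T ->
  o \in T ->
  outer_next (inner_faces T o) v1 v2 ->
  run (inner_faces T o) v1 v2 O ->
  internal_3_orientation T o (interior_restriction T o O).
Proof.
case: o => [[p q] r] HT oT o12 hrun.
apply: (internal_3_orientation_good HT oT o12).
exact: good_orientation_run HT hrun (near_triangulation_inner HT oT) o12.
Qed.
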